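(* For integers $n\ge 2$ and $0\le k\le n-1$, let $\mathrm{TH}_k:\{0,1\}^n\rightarrow\{0,1\}$ be defined by $\mathrm{TH}_k(x)=1$ iff $|x|>k$, where $|x|$ is the Hamming weight. Then $UC(\mathrm{TH}_k)=UQ(\mathrm{TH}_k)=1$, and $WUC(\mathrm{TH}_k)=WUQ(\mathrm{TH}_k)=\Theta(\log n)$, i.e. there are constants $c_1,c_2>0$ (independent of $n,k$) such that $c_1\log n\le WUQ(\mathrm{TH}_k)\le WUC(\mathrm{TH}_k)\le c_2\log n$ for all sufficiently large $n$ and all $0\le k\le n-1$.
   Context: Query model: a classical randomized query algorithm adaptively queries input bits $x_i$ (each query costs one) and outputs a bit; a quantum query algorithm alternates input-independent unitaries with the oracle $O_x:|i,b,z\rangle\mapsto|i,b\oplus x_i,z\rangle$ and measures an output bit. $UQ(f)$ (resp. $UC(f)$) is the minimum number of queries of a quantum (resp. classical randomized) algorithm that on every input outputs $f(x)$ with probability strictly greater than $1/2$. For an algorithm whose minimum over inputs of the success probability is $p>1/2$, its bias is $\beta=p-1/2$ and its weakly unbounded cost is (number of queries) $+\log(1/(2\beta))$; $WUQ(f)$ (resp. $WUC(f)$) is the minimum weakly unbounded cost over quantum (resp. classical randomized) algorithms. $\log$ is base 2. *)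

From HB Require Import structures.
From mathcomp Require Import all_boot all_order all_algebra.
From mathcomp Require Import all_classical all_reals all_analysis.
From mathcomp Require Import complex.

Set Implicit Arguments.
Unset Strict Implicit.
Unset Printing Implicit Defensive.

Import Order.TTheory GRing.Theory Num.Theory.
Local Open Scope ring_scope.
Local Open Scope classical_set_scope.

Definition input (n : nat) := {ffun 'I_n -> bool}.
Definition boolfun (n : nat) := input n -> bool.

Definition hweight (n : nat) (x : input n) : nat := (\sum_(i < n) (x i : nat))%N.

Definition TH (n k : nat) : boolfun n := fun x => (k < hweight x)%N.

Definition log2 {R : realType} (x : R) : R := ln x / ln 2.

Definition min_succ {R : realType} (n : nat) (succ : input n -> R) : R :=
  \big[Num.min/1]_(x : input n) succ x.

Definition wu_cost {R : realType} (T : nat) (p : R) : R :=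
  T%:R + log2 (1 / (2 * (p - 1 / 2))).

(* A randomized algorithm is a finite probability distribution over     *)
(* deterministic (adaptive) decision trees; its number of queries is    *)
(* the maximal depth of the trees in its support.                       *)
Inductive dtree (n : nat) : Type :=
| DLeaf : bool -> dtree n
| DQuery : 'I_n -> dtree n -> dtree n -> dtree n.
  (* DQuery i t0 t1 : query x_i, continue with t0 if x_i = 0, t1 if x_i = 1 *)

Fixpoint dt_depth (n : nat) (t : dtree n) : nat :=
  match t with
  | DLeaf _ => 0
  | DQuery _ t0 t1 => (maxn (dt_depth t0) (dt_depth t1)).+1
  end.

Fixpoint dt_eval (n : nat) (t : dtree n) (x : input n) : bool :=
  match t with
  | DLeaf b => b
  | DQuery i t0 t1 => if x i then dt_eval t1 x else dt_eval t0 x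
  end.

Definition ralg {R : realType} (n : nat) := seq (R * dtree n).

Definition ralg_valid {R : realType} (n T : nat) (A : @ralg R n) : Prop :=
  all (fun pt : R * dtree n => 0 <= pt.1) A /\
  \sum_(pt <- A) pt.1 = 1 /\
  all (fun pt : R * dtree n => (dt_depth pt.2 <= T)%N) A.

Definition ralg_succ {R : realType} (n : nat) (A : @ralg R n) (f : boolfun n)
  (x : input n) : R :=
  \sum_(pt <- A) pt.1 * (dt_eval pt.2 x == f x)%:R.

Definition UC {R : realType} (n : nat) (f : boolfun n) : R :=
  inf [set c : R | exists (T : nat) (A : @ralg R n),
        ralg_valid T A /\ (forall x, 1 / 2 < ralg_succ A f x) /\ c = T%:R].

Definition WUC {R : realType} (n : nat) (f : boolfun n) : R :=
  inf [set c : R | exists (T : nat) (A : @ralg R n),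
        ralg_valid T A /\ (forall x, 1 / 2 < ralg_succ A f x) /\
        c = wu_cost T (min_succ (ralg_succ A f))].

(* State space spanned by |i, b, z> with i : 'I_n, b : bool and a       *)
(* workspace z : 'I_m.+1 of arbitrary (finite) dimension.               *)
(* Operators are given by their matrix entries (row, column).           *)
Definition qbasis (n m : nat) := ('I_n * bool * 'I_m.+1)%type.

Definition qop {R : realType} (n m : nat) := qbasis n m -> qbasis n m -> R[i].
Definition qvec {R : realType} (n m : nat) := qbasis n m -> R[i].

Definition unitary {R : realType} (n m : nat) (U : @qop R n m) : Prop :=
  forall j j' : qbasis n m,
    \sum_(r : qbasis n m) conjc (U r j) * U r j' = (j == j')%:R.

Definition qapply {R : realType} (n m : nat) (U : @qop R n m) (v : @qvec R n m)
  : @qvec R n m := fun r => \sum_(c : qbasis n m) U r c * v c.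

Definition oracle {R : realType} (n m : nat) (x : input n) : @qop R n m :=
  fun r c => ((r == (c.1.1, addb c.1.2 (x c.1.1), c.2)) : bool)%:R.

Definition qinit {R : realType} (n m : nat) (e : qbasis n m) : @qvec R n m :=
  fun r => (r == e)%:R.

Fixpoint qrun {R : realType} (n m : nat) (U : nat -> @qop R n m)
  (e : qbasis n m) (x : input n) (t : nat) : @qvec R n m :=
  match t with
  | 0 => qapply (U 0%N) (qinit e)
  | t'.+1 => qapply (U t) (qapply (oracle x) (qrun U e x t'))
  end.

Definition sqnorm {R : realType} (z : R[i]) : R :=
  complex.Re z ^+ 2 + complex.Im z ^+ 2.

(* A T-query quantum algorithm: workspace size m, start basis state e,
   unitaries U 0, ..., U T; the output bit is obtained by measuring the
   b register in the computational basis. *)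
Record qalg {R : realType} (n : nat) := QAlg {
  qa_m : nat;
  qa_init : qbasis n qa_m;
  qa_U : nat -> @qop R n qa_m }.

Definition qalg_valid {R : realType} (n T : nat) (A : @qalg R n) : Prop :=
  forall t, (t <= T)%N -> unitary (@qa_U R n A t).

Definition qalg_prob1 {R : realType} (n T : nat) (A : @qalg R n) (x : input n) : R :=
  \sum_(r : qbasis n (@qa_m R n A) | r.1.2) sqnorm (qrun (@qa_U R n A) (@qa_init R n A) x T r).

Definition qalg_succ {R : realType} (n T : nat) (A : @qalg R n) (f : boolfun n)
  (x : input n) : R :=
  if f x then qalg_prob1 T A x else 1 - qalg_prob1 T A x.

Definition UQ {R : realType} (n : nat) (f : boolfun n) : R :=
  inf [set c : R | exists (T : nat) (A : @qalg R n),
        qalg_valid T A /\ (forall x, 1 / 2 < qalg_succ T A f x) /\ c = T%:R].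

Definition WUQ {R : realType} (n : nat) (f : boolfun n) : R :=
  inf [set c : R | exists (T : nat) (A : @qalg R n),
        qalg_valid T A /\ (forall x, 1 / 2 < qalg_succ T A f x) /\
        c = wu_cost T (min_succ (qalg_succ T A f))].

(* The upper bounds come from one classical algorithm: query a uniformly random bit
   and output it with probability 1/2, otherwise output a constant; with suitably
   tuned constants this computes TH_k with bias 1/(4n) using one query.  A
   randomized algorithm is a mixture of decision trees, and a quantum algorithm can
   prepare the mixture coherently (one amplitude per tree) and keep the history of
   answers in its workspace, so it reproduces the classical success probabilities;
   hence UQ <= UC and WUQ <= WUC.  For the lower bound, the inputs of weight k and
   k + 1 together have n + 1 sensitive positions; by a hybrid argument flipping a
   bit i moves the final state by at most 8 2^T times the total query mass on i,
   and a bias beta forces every such move to be at least beta^2, so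
   (n + 1) beta^2 <= 16 2^T T, i.e. log n = O(T + log (1 / beta)). *)

From HB Require Import structures.
From mathcomp Require Import all_boot all_order all_algebra.
From mathcomp Require Import all_classical all_reals all_analysis.
From mathcomp Require Import complex perm.
From mathcomp Require Import ring lra zify.
Import Order.TTheory GRing.Theory Num.Theory.
Local Open Scope ring_scope.
Set Implicit Arguments.
Unset Strict Implicit.
Unset Printing Implicit Defensive.

(** * Quantum states and the oracle *)

Section Amplitudes.
Variable R : realType.
Implicit Types (a b z : R[i]).

Lemma sqnormE z : (sqnorm z)%:C%C = (z^* * z)%C.
Proof. by case: z => a b; rewrite /sqnorm /GRing.mul /=; congr Complex; ring. Qed.

Lemma sqnorm_ge0 z : 0 <= sqnorm z.
Proof. by rewrite /sqnorm addr_ge0 // sqr_ge0. Qed.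

Lemma sqnormR (r : R) : sqnorm (r%:C)%C = r ^+ 2.
Proof. by rewrite /sqnorm /= expr0n addr0. Qed.

Lemma sqnorm0 : sqnorm (0 : R[i]) = 0.
Proof. by rewrite -[0 : R[i]]/((0 : R)%:C)%C sqnormR expr0n. Qed.

Lemma sqnorm_nat (b : bool) : sqnorm (b%:R : R[i]) = b%:R.
Proof. by case: b; rewrite ?sqnorm0 // -[1 : R[i]]/((1 : R)%:C)%C sqnormR expr1n. Qed.

Lemma sqnormN z : sqnorm (- z) = sqnorm z.
Proof. by case: z => a1 a2; rewrite /sqnorm /= !sqrrN. Qed.

Lemma sqnormD_le a b : sqnorm (a + b) <= 2 * sqnorm a + 2 * sqnorm b.
Proof.
case: a b => a1 a2 [b1 b2]; rewrite /sqnorm /=.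
have := sqr_ge0 (a1 - b1); have := sqr_ge0 (a2 - b2); nra.
Qed.

Lemma sqnormB_le a b : sqnorm (a - b) <= 2 * sqnorm a + 2 * sqnorm b.
Proof. by rewrite -(sqnormN b); apply: sqnormD_le. Qed.

(* |a|^2 - |b|^2 = Re ((a - b) (a + b)^* ), followed by AM-GM. *)
Lemma sqnorm_diff_le (beta : R) a b : 0 < beta ->
  beta * (sqnorm a - sqnorm b)
    <= sqnorm (a - b) + beta ^+ 2 / 2 * (sqnorm a + sqnorm b).
Proof.
case: a b => a1 a2 [b1 b2]; rewrite /sqnorm /= => beta_gt0.
have := sqr_ge0 ((a1 - b1) - beta * (a1 + b1) / 2).
have := sqr_ge0 ((a2 - b2) - beta * (a2 + b2) / 2).
have := sqr_ge0 (beta * (a1 - b1)); have := sqr_ge0 (beta * (a2 - b2)).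
nra.
Qed.

End Amplitudes.

Lemma sumr_pred_le_sum (R : realDomainType) (I : finType) (P : pred I)
    (F : I -> R) :
  (forall i, 0 <= F i) -> \sum_(i | P i) F i <= \sum_i F i.
Proof.
by move=> F_ge0; rewrite [X in _ <= X](bigID P) /= lerDl sumr_ge0.
Qed.

Section StateVectors.
Variables (R : realType) (n m : nat).
Implicit Types (v a b : @qvec R n m) (U : @qop R n m).

Definition vnorm2 v : R := \sum_r sqnorm (v r).

Definition vsub a b : @qvec R n m := fun r => a r - b r.
Definition vadd a b : @qvec R n m := fun r => a r + b r.

Lemma vnorm2_complex v : (vnorm2 v)%:C%C = \sum_r ((v r)^* * v r)%C.
Proof. by rewrite /vnorm2 rmorph_sum; apply: eq_bigr => r _; apply: sqnormE. Qed.

Lemma vnorm2_unitary U v : unitary U -> vnorm2 (qapply U v) = vnorm2 v.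
Proof.
move=> HU.
have col c c' : \sum_r ((U r c * v c)^* * (U r c' * v c'))%C
    = (v c)^*%C * v c' * (c == c')%:R.
  rewrite -HU big_distrr /=; apply: eq_bigr => r _; rewrite rmorphM /=; ring.
suff /(congr1 (@complex.Re R)) : (vnorm2 (qapply U v))%:C%C = (vnorm2 v)%:C%C by [].
rewrite !vnorm2_complex /qapply.
under eq_bigr => r _ do rewrite rmorph_sum big_distrl /=.
rewrite exchange_big /=; apply: eq_bigr => c _.
under eq_bigr => r _ do rewrite big_distrr /=.
rewrite exchange_big /= (bigD1 c) //= col eqxx mulr1 big1 ?addr0 // => c' Hc'.
by rewrite col eq_sym (negbTE Hc') mulr0.
Qed.

Lemma vnorm2_vsubC a b : vnorm2 (vsub a b) = vnorm2 (vsub b a).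
Proof. by apply: eq_bigr => r _; rewrite /vsub -opprB sqnormN. Qed.

Lemma vnorm2_vsubvv a : vnorm2 (vsub a a) = 0.
Proof. by rewrite /vnorm2 big1 // => r _; rewrite /vsub subrr sqnorm0. Qed.

Lemma vnorm2_vadd_le a b : vnorm2 (vadd a b) <= 2 * vnorm2 a + 2 * vnorm2 b.
Proof.
rewrite /vnorm2 !mulr_sumr -big_split /=; apply: ler_sum => r _.
exact: sqnormD_le.
Qed.

Lemma qapply_vsub U a b : vsub (qapply U a) (qapply U b) = qapply U (vsub a b).
Proof.
apply: funext => r; rewrite /vsub /qapply -sumrB; apply: eq_bigr => c _.
by rewrite mulrBr.
Qed.

Lemma qapply_qinit U c r : qapply U (qinit c) r = U r c.
Proof.
rewrite /qapply /qinit (bigD1 c) //= eqxx mulr1 big1 ?addr0 // => c' /negbTE ->.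
by rewrite mulr0.
Qed.

Lemma vnorm2_qinit c : vnorm2 (@qinit R n m c) = 1.
Proof.
rewrite /vnorm2 /qinit (bigD1 c) //= eqxx sqnorm_nat big1 ?addr0 //.
by move=> r /negbTE ->; rewrite sqnorm_nat.
Qed.

Lemma unitary_real U (u : qbasis n m -> qbasis n m -> R) :
  (forall r c, U r c = (u r c)%:C%C) ->
  (forall j j', \sum_r u r j * u r j' = (j == j')%:R) -> unitary U.
Proof.
move=> HU Hu j j'; under eq_bigr => r _ do rewrite !HU conjc_real -rmorphM.
by rewrite -rmorph_sum Hu rmorph_nat.
Qed.

Definition perm_op (g : qbasis n m -> qbasis n m) : @qop R n m :=
  fun r c => ((r == g c)%:R : R[i]).

Lemma unitary_perm_op g : injective g -> unitary (perm_op g).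
Proof.
move=> g_inj; apply: (@unitary_real _ (fun r c => (r == g c)%:R)).
  by move=> r c; rewrite /perm_op rmorph_nat.
move=> j j'; rewrite (bigD1 (g j)) //= big1 ?addr0.
  by rewrite eqxx mul1r (inj_eq g_inj).
by move=> r /negbTE ->; rewrite mul0r.
Qed.

Lemma qapply_perm_op (J : finType) g (a : J -> R[i]) (s : J -> qbasis n m) :
  qapply (perm_op g) (fun r => \sum_j a j * (r == s j)%:R)
  = fun r => \sum_j a j * (r == g (s j))%:R.
Proof.
apply: funext => r; rewrite /qapply /perm_op.
under eq_bigr => c _ do rewrite big_distrr /=.
rewrite exchange_big /=; apply: eq_bigr => j _.
rewrite (bigD1 (s j)) //= big1 ?addr0; first by rewrite eqxx mulr1 mulrC.
by move=> c /negbTE; rewrite eq_sym => ->; rewrite !mulr0.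
Qed.

Definition oracle_map (x : input n) (c : qbasis n m) : qbasis n m :=
  (c.1.1, c.1.2 (+) x c.1.1, c.2).

Lemma oracle_mapK x : involutive (oracle_map x).
Proof. by case=> [[i b] z]; rewrite /oracle_map /= addbK. Qed.

Lemma oracle_perm_op x : @oracle R n m x = perm_op (oracle_map x).
Proof. by []. Qed.

Lemma qapply_oracle x v r : qapply (oracle x) v r = v (oracle_map x r).
Proof.
rewrite oracle_perm_op /qapply /perm_op (bigD1 (oracle_map x r)) //= big1 ?addr0.
  by rewrite oracle_mapK eqxx mul1r.
move=> c Hc; suff /negbTE -> : r != oracle_map x c by rewrite mul0r.
by apply: contra Hc => /eqP ->; rewrite oracle_mapK.
Qed.

Lemma sum_oracle_map x (P : pred (qbasis n m)) v :
  (forall r, P (oracle_map x r) = P r) ->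
  \sum_(r | P r) sqnorm (v (oracle_map x r)) = \sum_(r | P r) sqnorm (v r).
Proof.
move=> HP; rewrite [RHS](reindex_inj (can_inj (oracle_mapK x))) /=.
by apply: eq_bigl => r; rewrite HP.
Qed.

Lemma vnorm2_oracle x v : vnorm2 (qapply (oracle x) v) = vnorm2 v.
Proof.
rewrite /vnorm2; under eq_bigr => r _ do rewrite qapply_oracle.
exact: (@sum_oracle_map x predT).
Qed.

(* The probability that the next oracle call queries x_i. *)
Definition qmass (i : 'I_n) v : R := \sum_(r | r.1.1 == i) sqnorm (v r).

Lemma qmass_ge0 i v : 0 <= qmass i v.
Proof. by apply: sumr_ge0 => r _; apply: sqnorm_ge0. Qed.

Lemma sum_qmass v : \sum_i qmass i v = vnorm2 v.
Proof.
rewrite /qmass /vnorm2 (exchange_big_dep predT) //=; apply: eq_bigr => r _.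
by rewrite (big_pred1 r.1.1).
Qed.

Definition flip_bit (x : input n) (i : 'I_n) : input n :=
  [ffun j => if j == i then ~~ x j else x j].

Lemma vnorm2_oracle_flip_bit_le x i v :
  vnorm2 (vsub (qapply (oracle x) v) (qapply (oracle (flip_bit x i)) v))
    <= 4 * qmass i v.
Proof.
rewrite /vnorm2 /vsub; under eq_bigr => r _ do rewrite !qapply_oracle.
rewrite (bigID (fun r : qbasis n m => r.1.1 == i)) /=.
rewrite [X in _ + X]big1 ?addr0; last first.
  by move=> r Hr; rewrite /oracle_map ffunE (negbTE Hr) subrr sqnorm0.
apply: (@le_trans _ _ (\sum_(r | r.1.1 == i) (2 * sqnorm (v (oracle_map x r))
    + 2 * sqnorm (v (oracle_map (flip_bit x i) r))))).
  by apply: ler_sum => r _; apply: sqnormB_le.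
rewrite big_split /= -!mulr_sumr !sum_oracle_map // /qmass.
set M := \sum_(r | _) _; lra.
Qed.

Lemma prob_diff_le (P : pred (qbasis n m)) a b (beta : R) :
  vnorm2 a = 1 -> vnorm2 b = 1 -> 0 < beta ->
  beta * (\sum_(r | P r) sqnorm (a r) - \sum_(r | P r) sqnorm (b r))
    <= vnorm2 (vsub a b) + beta ^+ 2.
Proof.
move=> Ha Hb beta_gt0; rewrite -sumrB mulr_sumr.
apply: (@le_trans _ _ (\sum_(r | P r) (sqnorm (a r - b r)
    + beta ^+ 2 / 2 * (sqnorm (a r) + sqnorm (b r))))).
  by apply: ler_sum => r _; apply: sqnorm_diff_le.
apply: le_trans (sumr_pred_le_sum _ _) _.
  move=> r; apply: addr_ge0; first exact: sqnorm_ge0.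
  apply: mulr_ge0; last by apply: addr_ge0; apply: sqnorm_ge0.
  by apply: divr_ge0 => //; apply: sqr_ge0.
rewrite big_split /= -mulr_sumr [X in _ * X]big_split /=.
move: Ha Hb; rewrite /vnorm2 /vsub => -> ->; lra.
Qed.

End StateVectors.

Arguments perm_op {R n m} g.
Arguments vnorm2 {R n m}.
Arguments vsub {R n m}.
Arguments vadd {R n m}.
Arguments qmass {R n m}.

(** * The hybrid argument *)

Section Hybrid.
Variables (R : realType) (n T : nat) (A : @qalg R n).
Hypothesis A_valid : qalg_valid T A.

Definition state (x : input n) (t : nat) : @qvec R n (@qa_m R n A) :=
  qrun (@qa_U R n A) (@qa_init R n A) x t.

Lemma vnorm2_state x t : (t <= T)%N -> vnorm2 (state x t) = 1.
Proof.
elim: t => [|t IH] Ht; rewrite /state /= vnorm2_unitary.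
- exact: vnorm2_qinit.
- exact: A_valid.
- by rewrite vnorm2_oracle IH // ltnW.
- exact: A_valid.
Qed.

Lemma hybrid_step x i t : (t < T)%N ->
  vnorm2 (vsub (state x t.+1) (state (flip_bit x i) t.+1)) <=
  2 * vnorm2 (vsub (state x t) (state (flip_bit x i) t)) + 8 * qmass i (state x t).
Proof.
move=> Ht; rewrite /state /= qapply_vsub vnorm2_unitary; last exact: A_valid.
set a := qrun _ _ x t; set b := qrun _ _ (flip_bit x i) t; set y := flip_bit x i.
have -> : vsub (qapply (oracle x) a) (qapply (oracle y) b) =
    vadd (qapply (oracle y) (vsub a b))
         (vsub (qapply (oracle x) a) (qapply (oracle y) a)).
  by apply: funext => r; rewrite -qapply_vsub /vadd /vsub; ring.
apply: le_trans (vnorm2_vadd_le _ _) _.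
by rewrite vnorm2_oracle; have := vnorm2_oracle_flip_bit_le x i a; lra.
Qed.

(* Using |a + b|^2 <= 2|a|^2 + 2|b|^2 at each step instead of the triangle
   inequality costs a factor 2^t, which only adds O(T) to the final logarithm. *)
Lemma hybrid_bound x i t : (t <= T)%N ->
  vnorm2 (vsub (state x t) (state (flip_bit x i) t)) <=
  8 * 2 ^+ t * \sum_(s < t) qmass i (state x s).
Proof.
elim: t => [|t IH] Ht; first by rewrite big_ord0 mulr0 vnorm2_vsubvv.
apply: le_trans (hybrid_step x i Ht) _.
have {IH} := IH (ltnW Ht); rewrite big_ord_recr /= exprS.
have : 0 <= \sum_(s < t) qmass i (state x s) by apply: sumr_ge0 => s _; apply: qmass_ge0.
have := qmass_ge0 i (state x t).
have : 1 <= (2 : R) ^+ t by rewrite exprn_ege1 // ler1n.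
set S := \sum_(s < t) _; set M := qmass i _; set P := (2 : R) ^+ t; nra.
Qed.

Lemma hybrid_sum x (P : pred 'I_n) :
  \sum_(i | P i) vnorm2 (vsub (state x T) (state (flip_bit x i) T))
    <= 8 * 2 ^+ T * T%:R.
Proof.
apply: (@le_trans _ _ (\sum_(i | P i) (8 * 2 ^+ T * \sum_(s < T) qmass i (state x s)))).
  by apply: ler_sum => i _; apply: hybrid_bound.
apply: le_trans (sumr_pred_le_sum _ _) _.
  move=> i; apply: mulr_ge0; first by apply: mulr_ge0 => //; apply: exprn_ge0.
  by apply: sumr_ge0 => s _; apply: qmass_ge0.
rewrite -mulr_sumr exchange_big /=.
under eq_bigr => s _ do rewrite sum_qmass vnorm2_state 1?ltnW //.
by rewrite sumr_const card_ord.
Qed.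

End Hybrid.

Arguments state {R n} A x t.

Lemma sum_ltn_ord (n j : nat) : (\sum_(i < n) ((i < j)%N : nat))%N = minn j n.
Proof.
elim: n => [|n IH]; first by rewrite big_ord0 minn0.
by rewrite big_ord_recr /= IH; case: (ltnP n j) => /= ?; lia.
Qed.

Definition prefix_input (n j : nat) : input n := [ffun i : 'I_n => (i < j)%N].

Lemma hweight_prefix_input n j : (j <= n)%N -> hweight (prefix_input n j) = j.
Proof.
move=> jn; rewrite /hweight (eq_bigr (fun i : 'I_n => ((i < j)%N : nat))).
  by rewrite sum_ltn_ord; lia.
by move=> i _; rewrite ffunE.
Qed.

Lemma hweight_flip_bit n (x : input n) i :
  (hweight (flip_bit x i) + x i = hweight x + ~~ x i)%N.
Proof.
rewrite /hweight (bigD1 i) //= [X in (_ = X + _)%N](bigD1 i) //= ffunE eqxx.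
rewrite (eq_bigr (fun j => (x j : nat))); last by move=> j /negbTE Hj; rewrite ffunE Hj.
by case: (x i) => /=; lia.
Qed.

Lemma natr_hweight (R : nzSemiRingType) n (x : input n) :
  \sum_i ((x i)%:R : R) = (hweight x)%:R.
Proof. by rewrite /hweight natr_sum. Qed.

Lemma natr_hweightN (R : nzRingType) n (x : input n) :
  \sum_i ((~~ x i)%:R : R) = n%:R - (hweight x)%:R.
Proof.
rewrite -natr_hweight -[n in n%:R]card_ord -sumr_const -sumrB.
by apply: eq_bigr => i _; case: (x i); rewrite ?subr0 ?subrr.
Qed.

Section BiasBound.
Variables (R : realType) (n T : nat) (Q : @qalg R n) (f : boolfun n).
Hypotheses (Q_valid : qalg_valid T Q) (Q_succ : forall x, 1 / 2 < qalg_succ T Q f x).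
Let bias := min_succ (qalg_succ T Q f) - 1 / 2.

Lemma bias_gt0 : 0 < bias.
Proof. by rewrite subr_gt0; apply: lt_bigmin => //; lra. Qed.

Lemma bias_sqr_le_dist x i : f (flip_bit x i) = ~~ f x ->
  bias ^+ 2 <= vnorm2 (vsub (state Q x T) (state Q (flip_bit x i) T)).
Proof.
move=> f_flip; set y := flip_bit x i in f_flip *.
have Hx := bigmin_le 1 x (qalg_succ T Q f).
have Hy := bigmin_le 1 y (qalg_succ T Q f).
have b_gt0 := bias_gt0; rewrite /bias -/(min_succ _) in Hx Hy b_gt0 *.
set p := min_succ _ in Hx Hy b_gt0 *; set b := p - 1 / 2 in b_gt0 *.
have bE : b = p - 1 / 2 by [].
move: Hx Hy; rewrite /qalg_succ f_flip /qalg_prob1.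
rewrite -!/(state Q _ T).
have Nx := vnorm2_state Q_valid x (leqnn T).
have Ny := vnorm2_state Q_valid y (leqnn T).
set Px := \sum_(r | _) sqnorm (state Q x T r).
set Py := \sum_(r | _) sqnorm (state Q y T r).
case: (f x) => /= Hx Hy.
- have := prob_diff_le (fun r => r.1.2) Nx Ny b_gt0; rewrite -/Px -/Py.
  have : b * (2 * b) <= b * (Px - Py) by rewrite ler_pM2l //; lra.
  lra.
- have := prob_diff_le (fun r => r.1.2) Ny Nx b_gt0; rewrite -/Px -/Py.
  have : b * (2 * b) <= b * (Py - Px) by rewrite ler_pM2l //; lra.
  rewrite vnorm2_vsubC; lra.
Qed.

Lemma sensitivity_bias_le x (P : pred 'I_n) :
  (forall i, P i -> f (flip_bit x i) = ~~ f x) ->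
  bias ^+ 2 * \sum_i ((P i)%:R : R) <= 8 * 2 ^+ T * T%:R.
Proof.
move=> sensP; apply: le_trans (hybrid_sum Q_valid x P).
rewrite mulr_sumr (eq_bigr (fun i => if P i then bias ^+ 2 else 0)); last first.
  by move=> i _; case: (P i); rewrite ?mulr1 ?mulr0.
by rewrite -big_mkcond /=; apply: ler_sum => i Pi; apply: bias_sqr_le_dist (sensP i Pi).
Qed.

End BiasBound.

(* The inputs of weight k (flip any 0) and k + 1 (flip any 1) have n + 1
   sensitive positions for TH_k in total. *)
Lemma TH_bias_sqr_le (R : realType) n k T (Q : @qalg R n) :
  (k < n)%N -> qalg_valid T Q -> (forall x, 1 / 2 < qalg_succ T Q (TH k) x) ->
  n.+1%:R * (min_succ (qalg_succ T Q (TH k)) - 1 / 2) ^+ 2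
    <= 16 * 2 ^+ T * T%:R.
Proof.
move=> kn Q_valid Q_succ; set bias := (_ - _).
have Wk := @hweight_prefix_input n k (ltnW kn).
have Wk1 := @hweight_prefix_input n k.+1 kn.
have B0 : bias ^+ 2 * (n%:R - k%:R) <= 8 * 2 ^+ T * T%:R.
  rewrite -Wk -natr_hweightN.
  apply: (sensitivity_bias_le Q_valid Q_succ (x := prefix_input n k)) => i /negbTE xi.
  have := hweight_flip_bit (prefix_input n k) i; rewrite xi Wk /TH Wk ltnn /=.
  by move=> ?; apply/idP; lia.
have B1 : bias ^+ 2 * k.+1%:R <= 8 * 2 ^+ T * T%:R.
  rewrite -Wk1 -natr_hweight.
  apply: (sensitivity_bias_le Q_valid Q_succ (x := prefix_input n k.+1)) => i xi.
  have := hweight_flip_bit (prefix_input n k.+1) i; rewrite xi Wk1 /TH Wk1 ltnSn /=.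
  by move=> ?; apply/negbTE; rewrite -leqNgt; lia.
have -> : n.+1%:R * bias ^+ 2 = bias ^+ 2 * (n%:R - k%:R) + bias ^+ 2 * k.+1%:R.
  by rewrite -!natr1; ring.
lra.
Qed.

(** * A one-query randomized algorithm *)

Section RandomQuery.
Variables (R : realType) (n k : nat).
Hypothesis kn : (k < n)%N.
Let nR : R := n%:R.

Definition query_tree (i : 'I_n) : dtree n := DQuery i (DLeaf n false) (DLeaf n true).

(* With probability 1/2 output a uniformly random input bit; otherwise output a
   constant, 0 with probability (2k + 1)/(4n).  On inputs of weight w the success
   probability is then 1/2 + (2w - 2k - 1)/(4n) if w > k and
   1/2 + (2k + 1 - 2w)/(4n) if w <= k, at least 1/2 + 1/(4n) in both cases. *)
Definition rejecting_weight : R := (2 * k%:R + 1) / (4 * nR).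

Definition random_query_ralg : @ralg R n :=
  [seq (1 / (2 * nR), query_tree i) | i <- enum 'I_n] ++
  [:: (1 / 2 - rejecting_weight, DLeaf n true); (rejecting_weight, DLeaf n false)].

Let nR_gt0 : 0 < nR.
Proof. by rewrite ltr0n; lia. Qed.

Let kR_lt : k%:R + 1 <= nR.
Proof. by rewrite -[1]/(1%:R) -natrD ler_nat; lia. Qed.

Lemma random_query_ralg_valid : ralg_valid 1 random_query_ralg.
Proof.
have := nR_gt0; have := kR_lt => ? ?.
split; [|split].
- rewrite all_cat /= andbT; apply/andP; split.
    by rewrite all_map; apply/allP => i _ /=; rewrite divr_ge0 // mulr_ge0 // ltW.
  apply/andP; split.
    by rewrite /rejecting_weight subr_ge0 ler_pdivrMr ?mulr_gt0 //; lra.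
  by rewrite /rejecting_weight divr_ge0 ?mulr_ge0 ?ltW //; lra.
- rewrite big_cat /= !big_cons big_nil big_map /= big_enum /= sumr_const card_ord.
  by rewrite -mulr_natr -/nR /rejecting_weight; field; lra.
- by rewrite all_cat /= andbT all_map; apply/allP => i _ /=; rewrite max0n.
Qed.

Lemma sum_query_tree x b :
  \sum_(i in 'I_n) 1 / (2 * nR) * (dt_eval (query_tree i) x == b)%:R
    = (if b then (hweight x)%:R else nR - (hweight x)%:R) / (2 * nR).
Proof.
rewrite -mulr_sumr mul1r mulrC; congr (_ * _).
case: b; rewrite ?/nR -?natr_hweightN -?natr_hweight;
  by apply: eq_bigr => i _ /=; case: (x i).
Qed.

Lemma random_query_ralg_succ x :
  1 / 2 + 1 / (4 * nR) <= ralg_succ random_query_ralg (TH k) x.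
Proof.
have := nR_gt0; have := kR_lt => ? ?.
rewrite /ralg_succ big_cat /= !big_cons big_nil big_map /= big_enum /=.
rewrite sum_query_tree /rejecting_weight.
have w_le : (hweight x)%:R <= nR.
  rewrite ler_nat /hweight -[X in (_ <= X)%N]card_ord -sum1_card.
  by apply: leq_sum => i _; case: (x i).
rewrite /TH; case: ltnP => [kw|wk] /=; rewrite -subr_ge0.
- have : (k%:R + 1 : R) <= (hweight x)%:R by rewrite -[1]/(1%:R) -natrD ler_nat addn1.
  move: w_le; set w := (hweight x)%:R; set K := k%:R => ? ?.
  set d := (X in 0 <= X).
  have -> : d = (2 * w - 2 * K - 2) / (4 * nR) by rewrite /d; field; lra.
  by rewrite divr_ge0 //; lra.
- have : ((hweight x)%:R : R) <= k%:R by rewrite ler_nat.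
  move: w_le; set w := (hweight x)%:R; set K := k%:R => ? ?.
  set d := (X in 0 <= X).
  have -> : d = (2 * K - 2 * w) / (4 * nR) by rewrite /d; field; lra.
  by rewrite divr_ge0 //; lra.
Qed.

End RandomQuery.

(** * Quantum simulation of randomized algorithms *)

Section DecisionTreeWalk.
Variables (n : nat) (i0 : 'I_n).

(* At a leaf, the query index defaults to i0 and a step does nothing. *)
Definition dt_query (t : dtree n) : 'I_n := if t is DQuery i _ _ then i else i0.
Definition dt_step (t : dtree n) (b : bool) : dtree n :=
  if t is DQuery _ t0 t1 then (if b then t1 else t0) else t.
Definition dt_leafval (t : dtree n) : bool := if t is DLeaf b then b else false.

Fixpoint dt_walk (t : dtree n) (h : nat -> bool) (s : nat) : dtree n :=
  if s is s'.+1 then dt_step (dt_walk t h s') (h s') else t.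

Definition dt_path (t : dtree n) (x : input n) (s : nat) : dtree n :=
  iter s (fun u => dt_step u (x (dt_query u))) t.

Lemma dt_walk_path t (h : nat -> bool) (x : input n) s :
  (forall r, (r < s)%N -> h r = x (dt_query (dt_path t x r))) ->
  dt_walk t h s = dt_path t x s.
Proof.
elim: s => [//|s IH] H /=; rewrite IH ?H // => r Hr; apply: H; exact: ltnW.
Qed.

Lemma dt_eval_path t (x : input n) s :
  (dt_depth t <= s)%N -> dt_eval t x = dt_leafval (dt_path t x s).
Proof.
elim: t s => [b|i t0 IH0 t1 IH1] s /=.
  move=> _; suff -> : dt_path (DLeaf n b) x s = DLeaf n b by [].
  by elim: s => //= s; rewrite /dt_path /= => ->.
case: s => [//|s]; rewrite ltnS geq_max => /andP[d0 d1].
by rewrite /dt_path iterSr /=; case: (x i); [apply: IH1 | apply: IH0].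
Qed.

End DecisionTreeWalk.

Section SumIndicatorInj.
Variables (R : realType) (V : nzRingType) (I J : finType).
Variables (s : J -> I) (F : V -> R) (c : J -> V).
Hypotheses (s_inj : injective s) (F0 : F 0 = 0).

Lemma eval_sum_indicator r :
  F (\sum_j c j * (r == s j)%:R) = \sum_j F (c j) * (r == s j)%:R.
Proof.
case: (pickP (fun j => r == s j)) => [j0 /eqP ->|none]; last first.
  by rewrite !big1 // => j _; rewrite none mulr0.
rewrite (bigD1 j0) //= [X in _ = X](bigD1 j0) //= eqxx !mulr1.
rewrite !big1 ?addr0 // => j j_neq; rewrite (inj_eq s_inj) eq_sym (negbTE j_neq).
  by rewrite mulr0.
by rewrite mulr0.
Qed.

Lemma sum_eval_sum_indicator (P : pred I) :
  \sum_(r | P r) F (\sum_j c j * (r == s j)%:R) = \sum_j (P (s j))%:R * F (c j).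
Proof.
under eq_bigr => r _ do rewrite eval_sum_indicator.
rewrite exchange_big /=; apply: eq_bigr => j _.
rewrite -mulr_sumr mulrC; congr (_ * _).
rewrite big_mkcond (bigD1 (s j)) //= eqxx big1 ?addr0; first by case: (P (s j)).
by move=> r /negbTE ->; case: (P r).
Qed.

End SumIndicatorInj.

Section Simulation.
Variables (R : realType) (n : nat) (i0 : 'I_n) (T : nat) (A : @ralg R n).
Hypothesis A_valid : ralg_valid T A.
Let L := size A.
Let d0 : R * dtree n := (0, DLeaf n false).

(* Trees are indexed by 'I_L.+1: the extra index L has weight 0 and labels the
   initial basis state of the simulation. *)
Definition tree_weight (j : 'I_L.+1) : R := (nth d0 A j).1.
Definition tree_at (j : 'I_L.+1) : dtree n := (nth d0 A j).2.

Lemma tree_weight_ge0 j : 0 <= tree_weight j.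
Proof.
rewrite /tree_weight; case: (ltnP j L) => jL; last by rewrite nth_default.
by case: A_valid => /all_nthP H _; apply: H.
Qed.

Lemma tree_at_depth j : (dt_depth (tree_at j) <= T)%N.
Proof.
rewrite /tree_at; case: (ltnP j L) => jL; last by rewrite nth_default.
by case: A_valid => _ [_ /all_nthP H]; apply: H.
Qed.

Lemma tree_weight_max : tree_weight ord_max = 0.
Proof. by rewrite /tree_weight nth_default. Qed.

Lemma big_ralg_ord (F : R * dtree n -> R) : F d0 = 0 ->
  \sum_(pt <- A) F pt = \sum_(j < L.+1) F (nth d0 A j).
Proof.
move=> F0; rewrite big_ord_recr /= nth_default // F0 addr0.
by rewrite (big_nth d0) big_mkord.
Qed.

Lemma sum_tree_weight : \sum_j tree_weight j = 1.
Proof. by case: A_valid => _ [<- _]; rewrite (@big_ralg_ord (fun pt => pt.1)). Qed.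

Definition history := {ffun 'I_T.+1 -> bool}.
Definition workspace := ('I_L.+1 * history)%type.
Definition no_answers : history := [ffun => false].

Lemma card_workspace : #|{: workspace}| = (#|{: workspace}|.-1).+1.
Proof. by rewrite prednK //; apply/card_gt0P; exists (ord0, no_answers). Qed.

Definition ws_size := #|{: workspace}|.-1.
Definition ws_enc (w : workspace) : 'I_ws_size.+1 :=
  cast_ord card_workspace (enum_rank w).
Definition ws_dec (z : 'I_ws_size.+1) : workspace :=
  enum_val (cast_ord (esym card_workspace) z).

Lemma ws_encK : cancel ws_enc ws_dec.
Proof. by move=> w; rewrite /ws_dec /ws_enc cast_ordK enum_rankK. Qed.

Lemma ws_decK : cancel ws_dec ws_enc.
Proof. by move=> z; rewrite /ws_dec /ws_enc enum_valK cast_ordKV. Qed.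

Definition slot (t : nat) : 'I_T.+1 := inord t.

Lemma slotE t : (t <= T)%N -> slot t = t :> nat.
Proof. by move=> tT; rewrite /slot inordK. Qed.

Definition set_slot (t : nat) (b : bool) (h : history) : history :=
  [ffun k => if k == slot t then b else h k].

Definition next_query j (h : history) (t : nat) : 'I_n :=
  dt_query i0 (dt_walk (tree_at j) (fun k => h (inord k)) t).
Definition tree_output j (h : history) : bool :=
  dt_leafval (dt_walk (tree_at j) (fun k => h (inord k)) T).

Definition answers (t : nat) j (x : input n) : history :=
  [ffun k : 'I_T.+1 => (k < t)%N && x (dt_query i0 (dt_path i0 (tree_at j) x k))].

Definition sim_basis (t : nat) j (x : input n) : qbasis n ws_size :=
  (next_query j (answers t j x) t, (t == T) && tree_output j (answers t j x),
   ws_enc (j, answers t j x)).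

Lemma sim_basis_inj t x : injective (fun j => sim_basis t j x).
Proof. by move=> j j' /(congr1 (fun c => (ws_dec c.2).1)) /=; rewrite !ws_encK. Qed.

Definition sim_start j : qbasis n ws_size :=
  (next_query j no_answers 0, (0 == T) && tree_output j no_answers,
   ws_enc (j, no_answers)).

Lemma sim_basis0 j x : sim_basis 0 j x = sim_start j.
Proof.
rewrite /sim_basis; suff -> : answers 0 j x = no_answers by [].
by apply/ffunP => k; rewrite !ffunE.
Qed.

Lemma sim_start_inj : injective sim_start.
Proof. by move=> j j' /(congr1 (fun c => (ws_dec c.2).1)) /=; rewrite !ws_encK. Qed.

(* Step t >= 1.  For tree j the state before it is (q, x_q, (j, h)), with q the
   t-th query and h the first t - 1 answers.  The answer goes into slot t - 1,
   the index register moves from q to the next query by a transposition, and the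
   last step writes the output bit.  Xoring the old slot into the b register
   keeps the map bijective. *)
Definition record_answer (t : nat) (c : qbasis n ws_size) : qbasis n ws_size :=
  let: (i, b, z) := c in let: (j, h) := ws_dec z in
  let h' := set_slot t.-1 b h in
  (tperm (next_query j (set_slot t.-1 false h') t.-1) (next_query j h' t) i,
   h (slot t.-1) (+) ((t == T) && tree_output j h'), ws_enc (j, h')).

Definition record_answer_inv (t : nat) (c : qbasis n ws_size) : qbasis n ws_size :=
  let: (i, b, z) := c in let: (j, h') := ws_dec z in
  let h := set_slot t.-1 (b (+) ((t == T) && tree_output j h')) h' in
  (tperm (next_query j (set_slot t.-1 false h') t.-1) (next_query j h' t) i,
   h' (slot t.-1), ws_enc (j, h)).

Lemma record_answerK t : cancel (record_answer t) (record_answer_inv t).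
Proof.
case=> [[i b] z]; rewrite /record_answer /record_answer_inv.
case E: (ws_dec z) => [j h] /=; rewrite ws_encK /= tpermK ffunE eqxx addbK.
have -> : set_slot t.-1 (h (slot t.-1)) (set_slot t.-1 b h) = h.
  by apply/ffunP => k; rewrite /set_slot !ffunE; case: eqP => // ->.
by rewrite -E ws_decK.
Qed.

Lemma record_answer_step t j x : (t < T)%N ->
  record_answer t.+1 (oracle_map x (sim_basis t j x)) = sim_basis t.+1 j x.
Proof.
move=> tT; have tT' := ltnW tT.
rewrite /record_answer /sim_basis /oracle_map /= ws_encK /=.
have -> : (t == T) = false by apply/negbTE; rewrite neq_ltn tT.
set H := answers t j x.
have next_query_path : next_query j H t = dt_query i0 (dt_path i0 (tree_at j) x t).
  rewrite /next_query (@dt_walk_path _ i0 _ _ x) // => r rt.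
  by rewrite ffunE inordK ?rt // ltnS (leq_trans (ltnW rt)).
have H_slot : H (slot t) = false by rewrite ffunE slotE // ltnn.
have answers_next : set_slot t (x (next_query j H t)) H = answers t.+1 j x.
  apply/ffunP => k; rewrite /set_slot !ffunE; case: eqP => [->|kt].
    by rewrite slotE // ltnSn next_query_path.
  have kt' : (k != t :> nat).
    by apply/eqP => kt'; apply: kt; apply: val_inj; rewrite /= slotE.
  by have -> : (k < t.+1)%N = (k < t)%N by move: kt'; lia.
have answers_prev : set_slot t false (answers t.+1 j x) = H.
  rewrite -answers_next; apply/ffunP => k; rewrite /set_slot !ffunE; case: eqP => // ->.
  by rewrite slotE // ltnn.
by rewrite answers_next answers_prev H_slot tpermL.
Qed.

Definition sim_init : qbasis n ws_size := (i0, false, ws_enc (ord_max, no_answers)).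

Definition mixture (r : qbasis n ws_size) : R :=
  \sum_j Num.sqrt (tree_weight j) * (r == sim_start j)%:R.

(* U_0 is the reflection through the hyperplane orthogonal to sim_init - mixture:
   as sim_init and mixture are orthogonal unit vectors, it swaps them. *)
Definition reflection_vec (r : qbasis n ws_size) : R := (r == sim_init)%:R - mixture r.
Definition householder (r c : qbasis n ws_size) : R :=
  (r == c)%:R - reflection_vec r * reflection_vec c.

Lemma mixture_init : mixture sim_init = 0.
Proof.
rewrite /mixture big1 // => j _; case: eqP => [E|_]; last by rewrite mulr0.
move: (congr1 (fun c => (ws_dec c.2).1) E) => /=; rewrite !ws_encK /= => <-.
by rewrite tree_weight_max sqrtr0 mul0r.
Qed.

Lemma sum_mixture_sqr : \sum_r mixture r ^+ 2 = 1.
Proof.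
rewrite (@sum_eval_sum_indicator R R _ _ _ (fun a => a ^+ 2) _ sim_start_inj) ?expr0n //.
rewrite -[RHS]sum_tree_weight; apply: eq_bigr => j _ /=.
by rewrite mul1r sqr_sqrtr // tree_weight_ge0.
Qed.

Lemma sum_eq_mull (c : qbasis n ws_size) (F : qbasis n ws_size -> R) :
  \sum_r (r == c)%:R * F r = F c.
Proof.
rewrite (bigD1 c) //= eqxx mul1r big1 ?addr0 // => r /negbTE ->; by rewrite mul0r.
Qed.

Lemma sum_reflection_vec_sqr : \sum_r reflection_vec r ^+ 2 = 2.
Proof.
rewrite (eq_bigr (fun r => (r == sim_init)%:R * (1 - 2 * mixture r) + mixture r ^+ 2)).
  by rewrite big_split /= sum_eq_mull sum_mixture_sqr mixture_init; ring.
move=> r _; rewrite /reflection_vec.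
by case: (r == sim_init); rewrite /= ?mul1r ?mul0r; ring.
Qed.

Lemma householder_orthogonal j j' :
  \sum_r householder r j * householder r j' = (j == j')%:R.
Proof.
rewrite (eq_bigr (fun r => (r == j)%:R * (r == j')%:R
   - reflection_vec j' * ((r == j)%:R * reflection_vec r)
   - reflection_vec j * ((r == j')%:R * reflection_vec r)
   + reflection_vec j * reflection_vec j' * reflection_vec r ^+ 2)).
  rewrite !big_split /= !sumrN -!mulr_sumr !sum_eq_mull sum_reflection_vec_sqr.
  by rewrite eq_sym; ring.
by move=> r _; rewrite /householder; ring.
Qed.

Lemma householder_init r : householder r sim_init = mixture r.
Proof.
rewrite /householder.
have -> : reflection_vec sim_init = 1 by rewrite /reflection_vec eqxx mixture_init subr0.
by rewrite mulr1 /reflection_vec; ring.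
Qed.

Definition sim_U (t : nat) : @qop R n ws_size :=
  if t is 0 then (fun r c => (householder r c)%:C%C) else perm_op (record_answer t).

Definition ralg_to_qalg : @qalg R n := @QAlg R n ws_size sim_init sim_U.

Lemma ralg_to_qalg_valid : qalg_valid T ralg_to_qalg.
Proof.
move=> [|t] _ /=.
  by apply: (@unitary_real _ _ _ _ householder) => // j j'; apply: householder_orthogonal.
exact/unitary_perm_op/(can_inj (@record_answerK t.+1)).
Qed.

Definition sim_amp j : R[i] := (Num.sqrt (tree_weight j))%:C%C.

Lemma qrun_ralg_to_qalg x t : (t <= T)%N ->
  qrun sim_U sim_init x t = fun r => \sum_j sim_amp j * (r == sim_basis t j x)%:R.
Proof.
elim: t => [|t IH] tT.
  apply: funext => r; rewrite [qrun _ _ _ _]/= qapply_qinit householder_init /mixture.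
  rewrite rmorph_sum; apply: eq_bigr => j _.
  by rewrite rmorphM rmorph_nat sim_basis0.
rewrite [qrun _ _ _ _]/= (IH (ltnW tT)) oracle_perm_op !qapply_perm_op.
by apply: funext => r; apply: eq_bigr => j _; rewrite record_answer_step.
Qed.

Lemma tree_output_eval j x : tree_output j (answers T j x) = dt_eval (tree_at j) x.
Proof.
rewrite (@dt_eval_path _ i0 _ _ T) ?tree_at_depth // /tree_output.
rewrite (@dt_walk_path _ i0 _ _ x) // => r rT.
by rewrite ffunE inordK ?rT // ltnW.
Qed.

Lemma ralg_to_qalg_prob1 x :
  qalg_prob1 T ralg_to_qalg x = \sum_j tree_weight j * (dt_eval (tree_at j) x)%:R.
Proof.
rewrite /qalg_prob1 /= qrun_ralg_to_qalg //.
rewrite (@sum_eval_sum_indicator R _ _ _ (fun j => sim_basis T j x) (@sqnorm R) sim_amp);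
  [|exact: sim_basis_inj|exact: sqnorm0].
apply: eq_bigr => j _; rewrite /sim_amp sqnormR sqr_sqrtr ?tree_weight_ge0 //.
by rewrite /sim_basis /= eqxx /= tree_output_eval mulrC.
Qed.

Lemma ralg_to_qalg_succ (f : boolfun n) x :
  qalg_succ T ralg_to_qalg f x = ralg_succ A f x.
Proof.
rewrite /qalg_succ ralg_to_qalg_prob1 /ralg_succ.
rewrite (@big_ralg_ord (fun pt => pt.1 * (dt_eval pt.2 x == f x)%:R)) ?mul0r //.
case: (f x); first by apply: eq_bigr => j _; rewrite eqb_id.
rewrite -{1}sum_tree_weight -sumrB; apply: eq_bigr => j _; rewrite /tree_weight /tree_at.
by case: (dt_eval _ x); rewrite /= ?mulr1 ?mulr0 ?subrr ?subr0.
Qed.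

End Simulation.

(** * Costs and the complexity measures *)

Section Log2.
Variable R : realType.
Implicit Types a b : R.

Lemma ln2_gt0 : 0 < ln (2 : R).
Proof. by apply: ln_gt0; rewrite ltr1n. Qed.

Lemma log2M a b : 0 < a -> 0 < b -> log2 (a * b) = log2 a + log2 b.
Proof. by move=> a0 b0; rewrite /log2 lnM ?posrE // mulrDl. Qed.

Lemma log2X a k : 0 < a -> log2 (a ^+ k) = k%:R * log2 a.
Proof. by move=> a0; rewrite /log2 lnXn // -[ln a *+ k]mulr_natl mulrA. Qed.

Lemma log2_2 : log2 (2 : R) = 1.
Proof. by rewrite /log2 divff // lt0r_neq0 // ln2_gt0. Qed.

Lemma ler_log2 a b : 0 < a -> 0 < b -> (log2 a <= log2 b) = (a <= b).
Proof.
move=> a0 b0; rewrite /log2 ler_pM2r ?invr_gt0 ?ln2_gt0 //.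
by rewrite ler_ln ?posrE.
Qed.

End Log2.

Section CostBounds.
Variable R : realType.

(* (n + 1) beta^2 <= 16 2^T T <= 16 4^T gives 16 n beta^4 <= 2^(4T) once
   n >= 4096, that is n <= (2^T / (2 beta))^4. *)
Lemma bias_pow4_bound (n T : nat) (beta : R) : (4096 <= n)%N -> 0 < beta ->
  n.+1%:R * beta ^+ 2 <= 16 * 2 ^+ T * T%:R -> n%:R <= (2 ^+ T / (2 * beta)) ^+ 4.
Proof.
move=> n_ge beta_gt0 H; set X : R := 2 ^+ T.
have X_gt0 : 0 < X by rewrite exprn_gt0.
have T_le : (T%:R : R) <= X by rewrite /X -natrX ler_nat ltnW // ltn_expl.
have H2 : n.+1%:R * beta ^+ 2 <= 16 * X ^+ 2.
  by apply: le_trans H _; rewrite expr2 mulrA ler_wpM2l // mulr_ge0 // ltW.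
have n_sqr : (4096 * n%:R : R) <= n.+1%:R ^+ 2 by rewrite -natrM -natrX ler_nat; nia.
have sq : (n.+1%:R * beta ^+ 2) ^+ 2 <= (16 * X ^+ 2) ^+ 2.
  by rewrite ler_sqr ?nnegrE // mulr_ge0 // sqr_ge0.
rewrite !exprMn in sq; rewrite expr_div_n ler_pdivlMr ?exprn_gt0 ?mulr_gt0 //.
have -> : (2 * beta) ^+ 4 = 16 * (beta ^+ 2) ^+ 2 by ring.
have -> : X ^+ 4 = (X ^+ 2) ^+ 2 by ring.
have := ler_wpM2r (sqr_ge0 (beta ^+ 2)) n_sqr; lra.
Qed.

Lemma wu_cost_lb (n T : nat) (beta : R) : (4096 <= n)%N -> 0 < beta ->
  n.+1%:R * beta ^+ 2 <= 16 * 2 ^+ T * T%:R ->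
  1 / 4 * log2 (n%:R : R) <= T%:R + log2 (1 / (2 * beta)).
Proof.
move=> n_ge beta_gt0 H.
have n_gt0 : (0 : R) < n%:R by rewrite ltr0n; lia.
have inv_gt0 : 0 < 1 / (2 * beta) by rewrite divr_gt0 ?mulr_gt0.
have Y_gt0 : 0 < 2 ^+ T * (1 / (2 * beta)) by rewrite mulr_gt0 ?exprn_gt0.
have := bias_pow4_bound n_ge beta_gt0 H.
have -> : 2 ^+ T / (2 * beta) = 2 ^+ T * (1 / (2 * beta)) by rewrite mul1r.
rewrite -(ler_log2 n_gt0) ?exprn_gt0 // log2X // log2M ?exprn_gt0 // log2X //.
by rewrite log2_2 mulr1; lra.
Qed.

Lemma wu_cost_ub (n : nat) (p : R) : (2 <= n)%N -> 1 / 2 + 1 / (4 * n%:R) <= p ->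
  wu_cost 1 p <= 3 * log2 (n%:R : R).
Proof.
move=> n_ge p_ge; have n2 : (2 : R) <= n%:R by rewrite ler_nat.
have inv_gt0 : 0 < 1 / (4 * (n%:R : R)) by rewrite divr_gt0 // mulr_gt0 //; lra.
have inv_le : 1 / (2 * (p - 1 / 2)) <= 2 * n%:R.
  rewrite ler_pdivrMr ?mulr_gt0 //; last lra.
  move: p_ge; rewrite -lerBrDl ler_pdivrMr ?mulr_gt0 //; lra.
have : log2 (1 / (2 * (p - 1 / 2))) <= log2 (2 * (n%:R : R)).
  by rewrite ler_log2 // ?divr_gt0 ?mulr_gt0 //; lra.
have : log2 (2 : R) <= log2 (n%:R : R) by rewrite ler_log2 //; lra.
by rewrite /wu_cost log2M //; [rewrite log2_2; lra | lra].
Qed.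

End CostBounds.

Local Open Scope classical_set_scope.

Section Infima.
Variable R : realType.
Implicit Types (S U : set R).

Lemma inf_attained S x : S x -> lbound S x -> inf S = x.
Proof.
move=> Sx lbx; apply/eqP; rewrite eq_le lb_le_inf ?andbT //; last by exists x.
by apply: ge_inf => //; exists x.
Qed.

Lemma le_inf_subset S U : S `<=` U -> S !=set0 -> has_lbound U -> inf U <= inf S.
Proof.
move=> SU S0 U_lb; apply: lb_le_inf => // c Sc.
by apply: ge_inf => //; apply: SU.
Qed.

End Infima.

Section ZeroQueries.
Variables (R : realType) (n : nat) (f : boolfun n) (x y : input n).
Hypothesis fxy : f x != f y.

Lemma ralg0_succ_sum (A : @ralg R n) :
  ralg_valid 0 A -> ralg_succ A f x + ralg_succ A f y = 1.
Proof.
case=> _ [<- depth0]; rewrite /ralg_succ -big_split /=.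
elim: A depth0 => [|[w t] A IH]; first by rewrite !big_nil.
rewrite /= !big_cons => /andP[t0 /IH ->]; congr (_ + _).
case: t t0 => [b|] //= _; rewrite -mulrDr.
by move: fxy; case: b (f x) (f y) => [] [] [] //= _; rewrite ?addr0 ?add0r mulr1.
Qed.

Lemma qalg0_succ_sum (Q : @qalg R n) : qalg_succ 0 Q f x + qalg_succ 0 Q f y = 1.
Proof.
rewrite /qalg_succ; have -> : qalg_prob1 0 Q y = qalg_prob1 0 Q x by [].
by move: fxy; case: (f x) (f y) => [] [] //= _; ring.
Qed.

End ZeroQueries.

Lemma TH_prefix_input_neq n k : (k < n)%N ->
  TH k (prefix_input n 0) != TH k (prefix_input n n).
Proof. by move=> kn; rewrite /TH !hweight_prefix_input // ltn0 kn. Qed.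

Section ThresholdComplexity.
Variables (R : realType) (n k : nat).
Hypothesis kn : (k < n)%N.

Let i0 : 'I_n := Ordinal kn.

Lemma random_query_ralg_correct x :
  1 / 2 < ralg_succ (random_query_ralg R n k) (TH k) x.
Proof.
apply: lt_le_trans (random_query_ralg_succ R kn x).
by rewrite ltrDl divr_gt0 // mulr_gt0 // ltr0n; lia.
Qed.

Lemma UC_TH : @UC R n (TH k) = 1.
Proof.
have fxy := TH_prefix_input_neq kn.
set x := prefix_input n 0 in fxy; set y := prefix_input n n in fxy.
apply: inf_attained.
  exists 1%N, (random_query_ralg R n k); split; first exact: random_query_ralg_valid.
  by split=> //; apply: random_query_ralg_correct.
move=> _ [[|T] [A [A_valid [A_succ ->]]]]; last by rewrite ler1n.
have := ralg0_succ_sum fxy A_valid; have := A_succ x; have := A_succ y; lra.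
Qed.

Lemma UQ_TH : @UQ R n (TH k) = 1.
Proof.
have fxy := TH_prefix_input_neq kn.
set x := prefix_input n 0 in fxy; set y := prefix_input n n in fxy.
apply: inf_attained.
  exists 1%N, (ralg_to_qalg i0 1 (random_query_ralg R n k)).
  have A_valid := random_query_ralg_valid R kn.
  split; first exact: ralg_to_qalg_valid.
  by split=> // z; rewrite ralg_to_qalg_succ //; apply: random_query_ralg_correct.
move=> _ [[|T] [Q [_ [Q_succ ->]]]]; last by rewrite ler1n.
have := qalg0_succ_sum fxy Q; have := Q_succ x; have := Q_succ y; lra.
Qed.

Let WUC_set := [set c : R | exists (T : nat) (A : @ralg R n),
  ralg_valid T A /\ (forall x, 1 / 2 < ralg_succ A (TH k) x) /\
  c = wu_cost T (min_succ (ralg_succ A (TH k)))].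
Let WUQ_set := [set c : R | exists (T : nat) (A : @qalg R n),
  qalg_valid T A /\ (forall x, 1 / 2 < qalg_succ T A (TH k) x) /\
  c = wu_cost T (min_succ (qalg_succ T A (TH k)))].

Lemma WUC_subset_WUQ : WUC_set `<=` WUQ_set.
Proof.
move=> _ [T [A [A_valid [A_succ ->]]]].
exists T, (ralg_to_qalg i0 T A); split; first exact: ralg_to_qalg_valid.
have -> : qalg_succ T (ralg_to_qalg i0 T A) (TH k) = ralg_succ A (TH k).
  by apply: funext => x; apply: ralg_to_qalg_succ.
by [].
Qed.

Lemma random_query_wu_cost :
  WUC_set (wu_cost 1 (min_succ (ralg_succ (random_query_ralg R n k) (TH k)))).
Proof.
exists 1%N, (random_query_ralg R n k); split; first exact: random_query_ralg_valid.
by split=> //; apply: random_query_ralg_correct.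
Qed.

Lemma WUQ_TH_lbound : (4096 <= n)%N -> lbound WUQ_set (1 / 4 * log2 (n%:R : R)).
Proof.
move=> n_ge _ [T [Q [Q_valid [Q_succ ->]]]].
apply: wu_cost_lb n_ge (bias_gt0 Q_succ) (TH_bias_sqr_le kn Q_valid Q_succ).
Qed.

Lemma random_query_min_succ : (2 <= n)%N ->
  1 / 2 + 1 / (4 * n%:R) <= min_succ (ralg_succ (random_query_ralg R n k) (TH k)).
Proof.
move=> n_ge; have n2 : (2 : R) <= n%:R by rewrite ler_nat.
apply: le_bigmin => [|x _]; last exact: random_query_ralg_succ.
have : 1 / (4 * n%:R) <= (1 / 2 : R) by rewrite ler_pdivrMr ?mulr_gt0 //; lra.
lra.
Qed.

Lemma WU_TH_bounds : (4096 <= n)%N ->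
  1 / 4 * log2 (n%:R : R) <= @WUQ R n (TH k) /\
  @WUQ R n (TH k) <= @WUC R n (TH k) /\
  @WUC R n (TH k) <= 3 * log2 (n%:R : R).
Proof.
move=> n_ge; have lbQ := WUQ_TH_lbound n_ge.
have WUC0 : WUC_set !=set0 by eexists; apply: random_query_wu_cost.
have hasQ : has_lbound WUQ_set by eexists; apply: lbQ.
split; [|split].
- by apply: lb_le_inf => //; case: WUC0 => c /WUC_subset_WUQ; exists c.
- exact: le_inf_subset WUC_subset_WUQ WUC0 hasQ.
- apply: le_trans (wu_cost_ub _ (random_query_min_succ _)); [|lia|lia].
  apply: ge_inf; last exact: random_query_wu_cost.
  by exists (1 / 4 * log2 (n%:R : R)) => c /WUC_subset_WUQ /lbQ.
Qed.

End ThresholdComplexity.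

Theorem theorem6 (R : realType) :
  (forall n k : nat, (2 <= n)%N -> (k <= n - 1)%N ->
     @UC R n (@TH n k) = 1 /\ @UQ R n (@TH n k) = 1) /\
  (exists c1 c2 : R, 0 < c1 /\ 0 < c2 /\
     exists N : nat, forall n k : nat, (N <= n)%N -> (k <= n - 1)%N ->
       c1 * log2 (n%:R : R) <= @WUQ R n (@TH n k) /\
       @WUQ R n (@TH n k) <= @WUC R n (@TH n k) /\
       @WUC R n (@TH n k) <= c2 * log2 (n%:R : R)).
Proof.
split=> [n k n_ge kn | ].
  have kn' : (k < n)%N by lia.
  by split; [apply: UC_TH kn' | apply: UQ_TH kn'].
exists (1 / 4), 3; do 2 (split; first lra); exists 4096%N => n k n_ge kn.
by apply: WU_TH_bounds; lia.
Qed.
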